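(* Let $\mathcal{C}$ be a class of hypergraphs that is closed under taking projections. If $\mathcal{C}$ has unbounded dual VC dimension, then for any integer $k$ there exists a hypergraph $\mathcal{H}$ in $\mathcal{C}$ with $2^k-1$ vertices and a test cover of size $k$.
   Context: For a hypergraph $\mathcal{H}=(V,\mathcal{E})$ and $X\subseteq V$, the projection of $\mathcal{H}$ on $X$ is the hypergraph $\mathcal{H}_{|X}$ on vertex set $X$ with hyperedges $\{e\cap X: e\in\mathcal{E}\}$. A set $X$ is shattered if $|\mathcal{H}_{|X}|=2^{|X|}$; the VC dimension is the maximum size of a shattered set. The dual hypergraph $\mathcal{H}^*$ has the hyperedges of $\mathcal{H}$ as vertices and, for each vertex $v$ of $\mathcal{H}$, a hyperedge consisting of the hyperedges containing $v$; the dual VC dimension of $\mathcal{H}$ is the VC dimension of $\mathcal{H}^*$. A test cover of $\mathcal{H}$ is a set of hyperedges such that every vertex lies in one of them and every pair of distinct vertices is separated by one of them (one contains exactly one of the two vertices). *)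

From mathcomp Require Import all_boot all_order.
From mathcomp Require Import finmap.
Set Implicit Arguments. Unset Strict Implicit. Unset Printing Implicit Defensive.
Local Open Scope fset_scope.

Record hypergraph (K : choiceType) := Hypergraph {
  hvert  : {fset K};
  hedges : {fset {fset K}};
  hsub   : forall e, e \in hedges -> e `<=` hvert }.

Section Defs.
Variable K : choiceType.
Implicit Types (H : hypergraph K) (X : {fset K}).

Lemma proj_sub H X : forall e, e \in [fset f `&` X | f in hedges H] -> e `<=` X.
Proof. by move=> e /imfsetP [f _ ->]; exact: fsubsetIr. Qed.

Definition proj H X : hypergraph K :=
  @Hypergraph K X [fset f `&` X | f in hedges H] (@proj_sub H X).

Definition shattered H X : Prop :=
  X `<=` hvert H /\ #|` hedges (proj H X)| = 2 ^ #|` X|.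

Definition shatteredb H X : bool :=
  (X `<=` hvert H) && (#|` hedges (proj H X)| == 2 ^ #|` X|).

Definition vc_dim H : nat :=
  \max_(X <- fpowerset (hvert H) | shatteredb H X) #|` X|.

Definition star H (v : K) : {fset {fset K}} := [fset e in hedges H | v \in e].

Lemma dual_sub H : forall s, s \in [fset star H v | v in hvert H] -> s `<=` hedges H.
Proof.
move=> s /imfsetP [v _ ->]; apply/fsubsetP => e.
by rewrite /star inE => /andP [].
Qed.

Definition dual H : hypergraph {fset K} :=
  @Hypergraph _ (hedges H) [fset star H v | v in hvert H] (@dual_sub H).


Definition test_cover H (T : {fset {fset K}}) : Prop :=
  T `<=` hedges H /\
  (forall v, v \in hvert H -> exists2 e, e \in T & v \in e) /\
  (forall u v, u \in hvert H -> v \in hvert H -> u != v ->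
     exists2 e, e \in T & (u \in e) != (v \in e)).

End Defs.

Definition dual_vc_dim (K : choiceType) (H : hypergraph K) : nat := vc_dim (dual H).

Definition closed_under_projection (C : hypergraph nat -> Prop) : Prop :=
  forall H X, C H -> X `<=` hvert H -> C (proj H X).

Definition unbounded_dual_vc_dim (C : hypergraph nat -> Prop) : Prop :=
  forall d : nat, exists2 H, C H & d <= dual_vc_dim H.

From mathcomp Require Import all_boot all_order.
From mathcomp Require Import finmap.
Set Implicit Arguments.
Unset Strict Implicit.
Unset Printing Implicit Defensive.
Local Open Scope fset_scope.

(* If the dual of H shatters k hyperedges S, then every subset of S is the set
   of members of S containing some vertex. Keeping one such vertex for each
   nonempty subset of S and projecting H onto these 2^k - 1 vertices, the
   traces of the k hyperedges of S form a test cover: each kept vertex lies in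
   the traces indexed by its (nonempty) subset, and distinct kept vertices have
   distinct subsets. *)

Lemma bigmax_seq_witness (T : eqType) (s : seq T) (P : pred T) (F : T -> nat) k :
  0 < k -> k <= \max_(x <- s | P x) F x -> exists2 x, x \in s & P x && (k <= F x).
Proof.
move=> k_gt0 le_k_max; apply/hasP; apply: contraLR le_k_max => /hasPn noF.
rewrite -ltnNge -(prednK k_gt0) ltnS; apply/bigmax_leqP_seq => x xs Px.
by rewrite -ltnS prednK // ltnNge; apply: contraNN (noF x xs); rewrite Px.
Qed.

Lemma exists_fsubset_card (K : choiceType) (X : {fset K}) k :
  k <= #|` X| -> exists2 Y, Y `<=` X & #|` Y| = k.
Proof.
move=> le_k_X; exists [fset x in take k X].
  by apply/fsubsetP => x; rewrite inE => /mem_take.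
by rewrite card_fseq undup_id ?take_uniq // size_takel.
Qed.

Lemma exists_fsubset_section (K T : choiceType) (f : K -> T) (V : {fset K}) :
  exists X, [/\ X `<=` V, {in X &, injective f} & f @` X = f @` V].
Proof.
pose i v := index (f v) [seq f w | w <- V].
(* r v is the first element of V with the same image as v. *)
pose r v := nth v V (i v).
have i_lt v : v \in V -> i v < size V.
  by move=> vV; rewrite -(size_map f) index_mem map_f.
have rV v : v \in V -> r v \in V by move=> vV; exact/mem_nth/i_lt.
have f_r v : v \in V -> f (r v) = f v.
  by move=> vV; rewrite -(nth_map v (f v)) ?i_lt ?nth_index ?map_f.
exists (r @` V); split.
- by apply/fsubsetP => _ /imfsetP [v vV ->]; exact: rV.
- move=> _ _ /imfsetP [v vV ->] /imfsetP [w wV ->].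
  rewrite f_r // f_r // => fvw.
  by rewrite /r /i fvw (set_nth_default w) ?i_lt // -/(i w) -fvw i_lt.
- apply/fsetP => y; apply/imfsetP/imfsetP => [[_ /imfsetP [v vV ->] ->]|[v vV ->]].
    by exists v; rewrite ?f_r.
  by exists (r v); [exact: in_imfset | rewrite f_r].
Qed.

Lemma vc_dim_witness (K : choiceType) (H : hypergraph K) d :
  0 < d -> d <= vc_dim H -> exists2 X, shatteredb H X & d <= #|` X|.
Proof. by move=> d_gt0 /(bigmax_seq_witness d_gt0) [X _ /andP[]]; exists X. Qed.

Lemma shattered_trace (K : choiceType) (H : hypergraph K) (X A : {fset K}) :
  shatteredb H X -> A `<=` X -> exists2 e, e \in hedges H & e `&` X = A.
Proof.
case/andP=> _ /eqP card_traces AX.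
have traces_pow : hedges (proj H X) `<=` fpowerset X.
  by apply/fsubsetP => _ /imfsetP [e _ ->]; rewrite fpowersetE fsubsetIr.
have card_eq : #|` hedges (proj H X)| = #|` fpowerset X| by rewrite card_fpowerset.
have traces_eq := elimT (fsubset_cardP card_eq) traces_pow.
have : A \in hedges (proj H X) by rewrite traces_eq fpowersetE.
by case/imfsetP=> e eH ->; exists e.
Qed.

Section Incidence.
Variable K : choiceType.
Implicit Types (H : hypergraph K) (X : {fset K}) (S A : {fset {fset K}}).

Definition incident S (v : K) : {fset {fset K}} := [fset e in S | v \in e].

Lemma dual_shattered_incident H S0 S :
  shatteredb (dual H) S0 -> S `<=` S0 ->
  forall A, A `<=` S -> exists2 v, v \in hvert H & incident S v = A.
Proof.
move=> shS0 SS0 A AS; have S0H : S0 `<=` hedges H by case/andP: shS0.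
have [_ /imfsetP [v vH ->] starA] := shattered_trace shS0 (fsubset_trans AS SS0).
exists v => //; apply/fsetP => e; move/fsetP/(_ e): starA.
rewrite !inE; case eS: (e \in S) => /=.
  by rewrite (fsubsetP SS0 _ eS) (fsubsetP S0H) ?(fsubsetP SS0) // andbT.
by move=> _; apply/esym/negbTE; apply: contraFN eS => /(fsubsetP AS).
Qed.

Lemma exists_incidence_bijection H S :
  (forall A, A `<=` S -> exists2 v, v \in hvert H & incident S v = A) ->
  exists X, [/\ X `<=` hvert H, {in X &, injective (incident S)}
               & incident S @` X = fpowerset S `\ fset0].
Proof.
move=> realize; pose V := [fset v in hvert H | incident S v != fset0].
have [X [XV inj_X im_X]] := exists_fsubset_section (incident S) V.
exists X; split=> //.
  by apply: fsubset_trans XV _; apply/fsubsetP => v; rewrite inE => /andP[].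
rewrite im_X; apply/fsetP => A; rewrite in_fsetD1 fpowersetE.
apply/imfsetP/andP => [[v] | [A_neq0 AS]].
  rewrite inE => /andP [_ v_neq0] ->; split=> //.
  by apply/fsubsetP => e; rewrite inE => /andP[].
have [v vH vA] := realize A AS.
by exists v; rewrite // !inE /= vH vA.
Qed.

Lemma card_proj_family S X :
  (forall e, e \in S -> exists2 v, v \in X & incident S v = [fset e]) ->
  #|` [fset e `&` X | e in S]| = #|` S|.
Proof.
move=> single; apply/eqP/card_in_imfsetP => e e' eS e'S eX_e'X.
have [v vX ve] := single e eS.
have /[!inE] /andP [_ v_e] : e \in incident S v by rewrite ve inE.
have : v \in e' `&` X by rewrite -eX_e'X inE v_e vX.
rewrite in_fsetI => /andP [v_e' _].
by apply/eqP; rewrite eq_sym -in_fset1 -ve !inE /= e'S.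
Qed.

Lemma test_cover_proj H S X :
  S `<=` hedges H -> {in X, forall v, incident S v != fset0} ->
  {in X &, injective (incident S)} ->
  test_cover (proj H X) [fset e `&` X | e in S].
Proof.
move=> SH covered inj_X; split; [|split] => /=.
- apply/fsubsetP => _ /imfsetP [e eS ->]; exact/in_imfset/(fsubsetP SH).
- move=> v vX; have /fset0Pn [e] := covered v vX.
  rewrite inE => /andP [eS ve].
  by exists (e `&` X); [exact: in_imfset | rewrite inE ve vX].
- move=> u v uX vX u_neq_v.
  have /hasP [e eS sep] : has (fun e : {fset K} => (u \in e) != (v \in e)) S.
    apply: contraNT u_neq_v => /hasPn same; apply/eqP/inj_X => //.
    apply/fsetP => e; rewrite !inE /=; case eS: (e \in S) => //=.
    exact/eqP/negbNE/same.
  by exists (e `&` X); [exact: in_imfset | rewrite !in_fsetI uX vX !andbT].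
Qed.

End Incidence.

Theorem proposition2 (C : hypergraph nat -> Prop) :
  closed_under_projection C -> unbounded_dual_vc_dim C ->
  forall k : nat, exists2 H : hypergraph nat, C H &
    #|` hvert H| = 2 ^ k - 1 /\
    exists T : {fset {fset nat}}, #|` T| = k /\ test_cover H T.
Proof.
move=> closed unbounded k.
have [H0 CH0 dim_H0] := unbounded k.+1.
have [S0 shS0 /ltnW k_S0] := vc_dim_witness (ltn0Sn k) dim_H0.
have [S SS0 card_S] := exists_fsubset_card k_S0.
have SH0 : S `<=` hedges H0 by apply: fsubset_trans SS0 _; case/andP: shS0.
have [X [XH0 inj_X im_X]] := exists_incidence_bijection (dual_shattered_incident shS0 SS0).
have code_X A : (A \in incident S @` X) = (A `<=` S) && (A != fset0).
  by rewrite im_X in_fsetD1 fpowersetE andbC.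
exists (proj H0 X); first exact: closed.
split.
  have /card_in_imfsetP/eqP <- := inj_X.
  rewrite im_X cardfsDS ?fsub1set ?fpowersetE ?fsub0set //.
  by rewrite card_fpowerset card_S cardfs1.
exists [fset e `&` X | e in S]; split.
  rewrite card_proj_family // => e eS.
  have /imfsetP [v vX ve] : [fset e] \in incident S @` X.
    by rewrite code_X fsub1set eS -cardfs_gt0 cardfs1.
  by exists v.
apply: test_cover_proj => // v vX.
have : incident S v \in incident S @` X by exact: in_imfset.
by rewrite code_X => /andP [].
Qed.
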